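(* The Lack model structure on $2\mathrm{Cat}$ is left-induced along $\mathbb{H}\colon 2\mathrm{Cat}\to\mathrm{DblCat}$ (from the adjunction $\mathbb{H}\dashv\mathbf{H}$) from the model structure on $\mathrm{DblCat}$ right-induced along $(\mathbf{H},\mathcal{V})$ from two copies of the Lack model structure. That is, a 2-functor $F\colon\mathcal{A}\to\mathcal{B}$ is a biequivalence (resp.\ cofibration) in the Lack model structure if and only if $\mathbb{H}F$ is a weak equivalence (resp.\ cofibration) in $\mathrm{DblCat}$.
   Context: $\mathbb{H}\colon 2\mathrm{Cat}\to\mathrm{DblCat}$ sends a 2-category to the double category with the same objects, its morphisms as horizontal morphisms, only identity vertical morphisms, and its 2-cells as squares; its right adjoint $\mathbf{H}$ sends a double category to its underlying horizontal 2-category (objects, horizontal morphisms, squares with identity vertical boundaries as 2-cells). $\mathcal{V}\mathbb{A}$ is the 2-category with vertical morphisms as objects, squares as morphisms, and as 2-cells from $\alpha\colon(u\,{}^{a}_{b}\,v)$ to $\beta\colon(u\,{}^{c}_{d}\,v)$ pairs of squares with identity vertical boundaries $\sigma_0\colon a\Rightarrow c$, $\sigma_1\colon b\Rightarrow d$ with $\sigma_0$ on top of $\beta$ equal to $\alpha$ on top of $\sigma_1$. The Lack model structure on $2\mathrm{Cat}$ has biequivalences as weak equivalences, Lack fibrations as fibrations (2-functors $G$ for which equivalences $b\colon B\to GC$ lift to equivalences $a$ with $Ga=b$, and invertible 2-cells $\beta\colon b\cong Gc$ lift to invertible 2-cells with image $\beta$), and cofibrations the maps with the left lifting property against all 2-functors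 that are both. The model structure on $\mathrm{DblCat}$ has as weak equivalences (resp.\ fibrations) the double functors $F$ with $\mathbf{H}F$ and $\mathcal{V}F$ biequivalences (resp.\ Lack fibrations), and as cofibrations the maps with the left lifting property against trivial fibrations. *)

(* Strict 2-categories and strict
   double categories, presented "globularly": each kind of cell lives in one
   type, with boundary functions, and composition is a total operation whose
   laws are only required on composable arguments. *)
Set Implicit Arguments.
Unset Strict Implicit.

(* Underlying data of a (possibly non-lawful) 2-category.
   mcomp f g = "f then g" (g o f);  vcomp a b = "a then b" (vertical);
   hcomp a b = horizontal composite with a on the left (b * a). *)
Record TwoCat0 := {
  ob2 : Type; mor2 : Type; cell2 : Type;
  msrc : mor2 -> ob2; mtgt : mor2 -> ob2;
  csrc : cell2 -> mor2; ctgt : cell2 -> mor2;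
  idm : ob2 -> mor2; mcomp : mor2 -> mor2 -> mor2;
  idc : mor2 -> cell2;
  vcomp : cell2 -> cell2 -> cell2;
  hcomp : cell2 -> cell2 -> cell2 }.

Arguments msrc {t} _. Arguments mtgt {t} _. Arguments csrc {t} _.
Arguments ctgt {t} _. Arguments idm {t} _. Arguments mcomp {t} _ _.
Arguments idc {t} _. Arguments vcomp {t} _ _. Arguments hcomp {t} _ _.

Record TwoCatLaws (T : TwoCat0) : Prop := {
  l_idm_src : forall x : ob2 T, msrc (idm x) = x;
  l_idm_tgt : forall x : ob2 T, mtgt (idm x) = x;
  l_mcomp_src : forall f g : mor2 T, mtgt f = msrc g -> msrc (mcomp f g) = msrc f;
  l_mcomp_tgt : forall f g : mor2 T, mtgt f = msrc g -> mtgt (mcomp f g) = mtgt g;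
  l_mcomp_idl : forall f : mor2 T, mcomp (idm (msrc f)) f = f;
  l_mcomp_idr : forall f : mor2 T, mcomp f (idm (mtgt f)) = f;
  l_mcomp_assoc : forall f g h : mor2 T, mtgt f = msrc g -> mtgt g = msrc h ->
      mcomp (mcomp f g) h = mcomp f (mcomp g h);
  l_cell_par_src : forall a : cell2 T, msrc (csrc a) = msrc (ctgt a);
  l_cell_par_tgt : forall a : cell2 T, mtgt (csrc a) = mtgt (ctgt a);
  l_idc_src : forall f : mor2 T, csrc (idc f) = f;
  l_idc_tgt : forall f : mor2 T, ctgt (idc f) = f;
  l_vcomp_src : forall a b : cell2 T, ctgt a = csrc b -> csrc (vcomp a b) = csrc a;
  l_vcomp_tgt : forall a b : cell2 T, ctgt a = csrc b -> ctgt (vcomp a b) = ctgt b;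
  l_vcomp_idl : forall a : cell2 T, vcomp (idc (csrc a)) a = a;
  l_vcomp_idr : forall a : cell2 T, vcomp a (idc (ctgt a)) = a;
  l_vcomp_assoc : forall a b c : cell2 T, ctgt a = csrc b -> ctgt b = csrc c ->
      vcomp (vcomp a b) c = vcomp a (vcomp b c);
  l_hcomp_src : forall a b : cell2 T, mtgt (csrc a) = msrc (csrc b) ->
      csrc (hcomp a b) = mcomp (csrc a) (csrc b);
  l_hcomp_tgt : forall a b : cell2 T, mtgt (csrc a) = msrc (csrc b) ->
      ctgt (hcomp a b) = mcomp (ctgt a) (ctgt b);
  l_hcomp_idl : forall a : cell2 T, hcomp (idc (idm (msrc (csrc a)))) a = a;
  l_hcomp_idr : forall a : cell2 T, hcomp a (idc (idm (mtgt (csrc a)))) = a;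
  l_hcomp_assoc : forall a b c : cell2 T, mtgt (csrc a) = msrc (csrc b) ->
      mtgt (csrc b) = msrc (csrc c) -> hcomp (hcomp a b) c = hcomp a (hcomp b c);
  l_idc_mcomp : forall f g : mor2 T, mtgt f = msrc g ->
      idc (mcomp f g) = hcomp (idc f) (idc g);
  l_interchange : forall a b c d : cell2 T, mtgt (csrc a) = msrc (csrc b) ->
      ctgt a = csrc c -> ctgt b = csrc d ->
      vcomp (hcomp a b) (hcomp c d) = hcomp (vcomp a c) (vcomp b d) }.

Record TwoCat := { tc :> TwoCat0; tc_laws : TwoCatLaws tc }.

Record TwoFun (A B : TwoCat0) := {
  fo : ob2 A -> ob2 B; fm : mor2 A -> mor2 B; fc : cell2 A -> cell2 B;
  f_msrc : forall f, msrc (fm f) = fo (msrc f);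
  f_mtgt : forall f, mtgt (fm f) = fo (mtgt f);
  f_csrc : forall a, csrc (fc a) = fm (csrc a);
  f_ctgt : forall a, ctgt (fc a) = fm (ctgt a);
  f_idm : forall x, fm (idm x) = idm (fo x);
  f_mcomp : forall f g, mtgt f = msrc g -> fm (mcomp f g) = mcomp (fm f) (fm g);
  f_idc : forall f, fc (idc f) = idc (fm f);
  f_vcomp : forall a b, ctgt a = csrc b -> fc (vcomp a b) = vcomp (fc a) (fc b);
  f_hcomp : forall a b, mtgt (csrc a) = msrc (csrc b) ->
      fc (hcomp a b) = hcomp (fc a) (fc b) }.

(* Pre-2-categories: 2-category data together with a predicate singling out *)
(* which elements of cell2 are genuine 2-cells (used for the 2-categories    *)
(* H A and V A built from a double category A, whose 2-cells are squares    *)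
(* (resp. tuples of squares) satisfying conditions).  For an honest          *)
Record Pre2 := { p2 :> TwoCat0; cv : cell2 p2 -> Prop }.

Definition pre2_of (T : TwoCat0) : Pre2 := {| p2 := T; cv := fun _ => True |}.

Record PFun (A B : Pre2) := {
  pfo : ob2 A -> ob2 B; pfm : mor2 A -> mor2 B; pfc : cell2 A -> cell2 B }.

Definition pfun_of (A B : TwoCat0) (F : TwoFun A B) : PFun (pre2_of A) (pre2_of B) :=
  @Build_PFun (pre2_of A) (pre2_of B) (fo F) (fm F) (fc F).

Section Notions.
Variable T : Pre2.

Definition is_cell (a : cell2 T) (f g : mor2 T) : Prop :=
  cv a /\ csrc a = f /\ ctgt a = g.

Definition invertible_cell (a : cell2 T) : Prop :=
  cv a /\ exists b, is_cell b (ctgt a) (csrc a) /\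
    vcomp a b = idc (csrc a) /\ vcomp b a = idc (ctgt a).

Definition iso_cell (a : cell2 T) (f g : mor2 T) : Prop :=
  is_cell a f g /\ invertible_cell a.

Definition equivalence (f : mor2 T) : Prop :=
  exists (g : mor2 T) (a b : cell2 T),
    msrc g = mtgt f /\ mtgt g = msrc f /\
    iso_cell a (idm (msrc f)) (mcomp f g) /\
    iso_cell b (mcomp g f) (idm (mtgt f)).
End Notions.

(* Biequivalence: biessentially surjective on objects and locally an
   equivalence of hom-categories (essentially surjective + fully faithful). *)
Definition biequivalence (A B : Pre2) (F : PFun A B) : Prop :=
  (forall y : ob2 B, exists (x : ob2 A) (g : mor2 B),
      msrc g = pfo F x /\ mtgt g = y /\ equivalence g) /\
  (forall (x x' : ob2 A) (g : mor2 B), msrc g = pfo F x -> mtgt g = pfo F x' ->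
      exists (f : mor2 A) (b : cell2 B),
        msrc f = x /\ mtgt f = x' /\ iso_cell b (pfm F f) g) /\
  (forall (f f' : mor2 A) (b : cell2 B), msrc f = msrc f' -> mtgt f = mtgt f' ->
      is_cell b (pfm F f) (pfm F f') ->
      exists a : cell2 A, is_cell a f f' /\ pfc F a = b) /\
  (forall a a' : cell2 A, cv a -> cv a' -> csrc a = csrc a' -> ctgt a = ctgt a' ->
      pfc F a = pfc F a' -> a = a').

Definition lack_fibration (A B : Pre2) (F : PFun A B) : Prop :=
  (forall (c : ob2 A) (b : mor2 B), mtgt b = pfo F c -> equivalence b ->
      exists a : mor2 A, mtgt a = c /\ equivalence a /\ pfm F a = b) /\
  (forall (c : mor2 A) (beta : cell2 B), ctgt beta = pfm F c -> invertible_cell beta ->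
      exists alpha : cell2 A, ctgt alpha = c /\ invertible_cell alpha /\
        pfc F alpha = beta).

Definition biequiv2 (A B : TwoCat) (F : TwoFun A B) : Prop :=
  biequivalence (pfun_of F).

Definition llp2 (A B X Y : TwoCat) (i : TwoFun A B) (p : TwoFun X Y) : Prop :=
  forall (u : TwoFun A X) (v : TwoFun B Y),
    (forall x, fo p (fo u x) = fo v (fo i x)) ->
    (forall f, fm p (fm u f) = fm v (fm i f)) ->
    (forall a, fc p (fc u a) = fc v (fc i a)) ->
    exists h : TwoFun B X,
      (forall x, fo h (fo i x) = fo u x) /\ (forall f, fm h (fm i f) = fm u f) /\
      (forall a, fc h (fc i a) = fc u a) /\
      (forall x, fo p (fo h x) = fo v x) /\ (forall f, fm p (fm h f) = fm v f) /\
      (forall a, fc p (fc h a) = fc v a).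

Definition cofibration2 (A B : TwoCat) (F : TwoFun A B) : Prop :=
  forall (X Y : TwoCat) (p : TwoFun X Y),
    lack_fibration (pfun_of p) -> biequivalence (pfun_of p) -> llp2 F p.

(* A square s has horizontal boundaries stop s, sbot s and vertical
   boundaries slft s, srgt s.  dhc f g = "f then g", dvc u v = "u then v"
   (u on top).  dsq_hid u : horizontal identity square on the vertical u;
   dsq_vid f : vertical identity square on the horizontal f.
   dsq_hc a b : a left of b;  dsq_vc a b : a on top of b. *)
Record Dbl0 := {
  dob : Type; dh : Type; dv : Type; dsq : Type;
  hsrc : dh -> dob; htgt : dh -> dob;
  vsrc : dv -> dob; vtgt : dv -> dob;
  stop : dsq -> dh; sbot : dsq -> dh; slft : dsq -> dv; srgt : dsq -> dv;
  dhid : dob -> dh; dhc : dh -> dh -> dh;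
  dvid : dob -> dv; dvc : dv -> dv -> dv;
  dsq_hid : dv -> dsq; dsq_vid : dh -> dsq;
  dsq_hc : dsq -> dsq -> dsq; dsq_vc : dsq -> dsq -> dsq }.

Arguments hsrc {d} _. Arguments htgt {d} _. Arguments vsrc {d} _.
Arguments vtgt {d} _. Arguments stop {d} _. Arguments sbot {d} _.
Arguments slft {d} _. Arguments srgt {d} _. Arguments dhid {d} _.
Arguments dhc {d} _ _. Arguments dvid {d} _. Arguments dvc {d} _ _.
Arguments dsq_hid {d} _. Arguments dsq_vid {d} _. Arguments dsq_hc {d} _ _.
Arguments dsq_vc {d} _ _.

Record DblLaws (D : Dbl0) : Prop := {
  d_hid_src : forall x : dob D, hsrc (dhid x) = x;
  d_hid_tgt : forall x : dob D, htgt (dhid x) = x;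
  d_hc_src : forall f g : dh D, htgt f = hsrc g -> hsrc (dhc f g) = hsrc f;
  d_hc_tgt : forall f g : dh D, htgt f = hsrc g -> htgt (dhc f g) = htgt g;
  d_hc_idl : forall f : dh D, dhc (dhid (hsrc f)) f = f;
  d_hc_idr : forall f : dh D, dhc f (dhid (htgt f)) = f;
  d_hc_assoc : forall f g h : dh D, htgt f = hsrc g -> htgt g = hsrc h ->
      dhc (dhc f g) h = dhc f (dhc g h);
  d_vid_src : forall x : dob D, vsrc (dvid x) = x;
  d_vid_tgt : forall x : dob D, vtgt (dvid x) = x;
  d_vc_src : forall u v : dv D, vtgt u = vsrc v -> vsrc (dvc u v) = vsrc u;
  d_vc_tgt : forall u v : dv D, vtgt u = vsrc v -> vtgt (dvc u v) = vtgt v;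
  d_vc_idl : forall u : dv D, dvc (dvid (vsrc u)) u = u;
  d_vc_idr : forall u : dv D, dvc u (dvid (vtgt u)) = u;
  d_vc_assoc : forall u v w : dv D, vtgt u = vsrc v -> vtgt v = vsrc w ->
      dvc (dvc u v) w = dvc u (dvc v w);
  d_sq_lft_src : forall s : dsq D, vsrc (slft s) = hsrc (stop s);
  d_sq_lft_tgt : forall s : dsq D, vtgt (slft s) = hsrc (sbot s);
  d_sq_rgt_src : forall s : dsq D, vsrc (srgt s) = htgt (stop s);
  d_sq_rgt_tgt : forall s : dsq D, vtgt (srgt s) = htgt (sbot s);
  d_sqhid_lft : forall u : dv D, slft (dsq_hid u) = u;
  d_sqhid_rgt : forall u : dv D, srgt (dsq_hid u) = u;
  d_sqhid_top : forall u : dv D, stop (dsq_hid u) = dhid (vsrc u);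
  d_sqhid_bot : forall u : dv D, sbot (dsq_hid u) = dhid (vtgt u);
  d_sqvid_top : forall f : dh D, stop (dsq_vid f) = f;
  d_sqvid_bot : forall f : dh D, sbot (dsq_vid f) = f;
  d_sqvid_lft : forall f : dh D, slft (dsq_vid f) = dvid (hsrc f);
  d_sqvid_rgt : forall f : dh D, srgt (dsq_vid f) = dvid (htgt f);
  d_sqhc_top : forall a b : dsq D, srgt a = slft b -> stop (dsq_hc a b) = dhc (stop a) (stop b);
  d_sqhc_bot : forall a b : dsq D, srgt a = slft b -> sbot (dsq_hc a b) = dhc (sbot a) (sbot b);
  d_sqhc_lft : forall a b : dsq D, srgt a = slft b -> slft (dsq_hc a b) = slft a;
  d_sqhc_rgt : forall a b : dsq D, srgt a = slft b -> srgt (dsq_hc a b) = srgt b;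
  d_sqvc_lft : forall a b : dsq D, sbot a = stop b -> slft (dsq_vc a b) = dvc (slft a) (slft b);
  d_sqvc_rgt : forall a b : dsq D, sbot a = stop b -> srgt (dsq_vc a b) = dvc (srgt a) (srgt b);
  d_sqvc_top : forall a b : dsq D, sbot a = stop b -> stop (dsq_vc a b) = stop a;
  d_sqvc_bot : forall a b : dsq D, sbot a = stop b -> sbot (dsq_vc a b) = sbot b;
  d_sqhc_idl : forall a : dsq D, dsq_hc (dsq_hid (slft a)) a = a;
  d_sqhc_idr : forall a : dsq D, dsq_hc a (dsq_hid (srgt a)) = a;
  d_sqhc_assoc : forall a b c : dsq D, srgt a = slft b -> srgt b = slft c ->
      dsq_hc (dsq_hc a b) c = dsq_hc a (dsq_hc b c);
  d_sqvc_idl : forall a : dsq D, dsq_vc (dsq_vid (stop a)) a = a;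
  d_sqvc_idr : forall a : dsq D, dsq_vc a (dsq_vid (sbot a)) = a;
  d_sqvc_assoc : forall a b c : dsq D, sbot a = stop b -> sbot b = stop c ->
      dsq_vc (dsq_vc a b) c = dsq_vc a (dsq_vc b c);
  d_sqhid_vc : forall u v : dv D, vtgt u = vsrc v ->
      dsq_hid (dvc u v) = dsq_vc (dsq_hid u) (dsq_hid v);
  d_sqvid_hc : forall f g : dh D, htgt f = hsrc g ->
      dsq_vid (dhc f g) = dsq_hc (dsq_vid f) (dsq_vid g);
  d_sqhid_vid : forall x : dob D, dsq_hid (dvid x) = dsq_vid (dhid x);
  d_interchange : forall a b c d : dsq D, srgt a = slft b -> srgt c = slft d ->
      sbot a = stop c -> sbot b = stop d ->
      dsq_vc (dsq_hc a b) (dsq_hc c d) = dsq_hc (dsq_vc a c) (dsq_vc b d) }.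

Record DblCat := { dc :> Dbl0; dc_laws : DblLaws dc }.

Record DFun (X Y : Dbl0) := {
  go : dob X -> dob Y; gh : dh X -> dh Y; gv : dv X -> dv Y; gs : dsq X -> dsq Y;
  g_hsrc : forall f, hsrc (gh f) = go (hsrc f);
  g_htgt : forall f, htgt (gh f) = go (htgt f);
  g_vsrc : forall u, vsrc (gv u) = go (vsrc u);
  g_vtgt : forall u, vtgt (gv u) = go (vtgt u);
  g_top : forall s, stop (gs s) = gh (stop s);
  g_bot : forall s, sbot (gs s) = gh (sbot s);
  g_lft : forall s, slft (gs s) = gv (slft s);
  g_rgt : forall s, srgt (gs s) = gv (srgt s);
  g_hid : forall x, gh (dhid x) = dhid (go x);
  g_hc : forall f g, htgt f = hsrc g -> gh (dhc f g) = dhc (gh f) (gh g);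
  g_vid : forall x, gv (dvid x) = dvid (go x);
  g_vc : forall u v, vtgt u = vsrc v -> gv (dvc u v) = dvc (gv u) (gv v);
  g_sqhid : forall u, gs (dsq_hid u) = dsq_hid (gv u);
  g_sqvid : forall f, gs (dsq_vid f) = dsq_vid (gh f);
  g_sqhc : forall a b, srgt a = slft b -> gs (dsq_hc a b) = dsq_hc (gs a) (gs b);
  g_sqvc : forall a b, sbot a = stop b -> gs (dsq_vc a b) = dsq_vc (gs a) (gs b) }.

Definition globular (D : Dbl0) (s : dsq D) : Prop :=
  slft s = dvid (hsrc (stop s)) /\ srgt s = dvid (htgt (stop s)).

Definition HH (D : Dbl0) : Pre2 :=
  {| p2 := {| ob2 := dob D; mor2 := dh D; cell2 := dsq D;
              msrc := @hsrc D; mtgt := @htgt D;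
              csrc := @stop D; ctgt := @sbot D;
              idm := @dhid D; mcomp := @dhc D;
              idc := @dsq_vid D; vcomp := @dsq_vc D; hcomp := @dsq_hc D |};
     cv := @globular D |}.

Definition HHfun (X Y : Dbl0) (G : DFun X Y) : PFun (HH X) (HH Y) :=
  @Build_PFun (HH X) (HH Y) (go G) (gh G) (gs G).

(* A 2-cell of V D from alpha to beta is the pair (sig0, sig1); we record the
   source alpha and target beta as well. *)
Record VCell (S : Type) := mkVCell { va : S; vb : S; vs0 : S; vs1 : S }.

Definition VCell_wf (D : Dbl0) (c : VCell (dsq D)) : Prop :=
  slft (va c) = slft (vb c) /\ srgt (va c) = srgt (vb c) /\
  globular (vs0 c) /\ globular (vs1 c) /\
  stop (vs0 c) = stop (va c) /\ sbot (vs0 c) = stop (vb c) /\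
  stop (vs1 c) = sbot (va c) /\ sbot (vs1 c) = sbot (vb c) /\
  dsq_vc (vs0 c) (vb c) = dsq_vc (va c) (vs1 c).

Definition VV (D : Dbl0) : Pre2 :=
  {| p2 := {| ob2 := dv D; mor2 := dsq D; cell2 := VCell (dsq D);
              msrc := @slft D; mtgt := @srgt D;
              csrc := @va _; ctgt := @vb _;
              idm := @dsq_hid D; mcomp := @dsq_hc D;
              idc := fun s => mkVCell s s (dsq_vid (stop s)) (dsq_vid (sbot s));
              vcomp := fun c c' => mkVCell (va c) (vb c')
                         (dsq_vc (vs0 c) (vs0 c')) (dsq_vc (vs1 c) (vs1 c'));
              hcomp := fun c c' => mkVCell (dsq_hc (va c) (va c'))
                         (dsq_hc (vb c) (vb c'))
                         (dsq_hc (vs0 c) (vs0 c')) (dsq_hc (vs1 c) (vs1 c')) |};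
     cv := @VCell_wf D |}.

Definition VVfun (X Y : Dbl0) (G : DFun X Y) : PFun (VV X) (VV Y) :=
  @Build_PFun (VV X) (VV Y) (gv G) (gs G)
     (fun c => mkVCell (gs G (va c)) (gs G (vb c)) (gs G (vs0 c)) (gs G (vs1 c))).

Definition dbl_weq (X Y : Dbl0) (G : DFun X Y) : Prop :=
  biequivalence (HHfun G) /\ biequivalence (VVfun G).

Definition dbl_trivfib (X Y : Dbl0) (G : DFun X Y) : Prop :=
  lack_fibration (HHfun G) /\ lack_fibration (VVfun G) /\ dbl_weq G.

Definition llpD (P Q X Y : Dbl0) (i : DFun P Q) (p : DFun X Y) : Prop :=
  forall (u : DFun P X) (v : DFun Q Y),
    (forall x, go p (go u x) = go v (go i x)) ->
    (forall f, gh p (gh u f) = gh v (gh i f)) ->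
    (forall w, gv p (gv u w) = gv v (gv i w)) ->
    (forall s, gs p (gs u s) = gs v (gs i s)) ->
    exists h : DFun Q X,
      (forall x, go h (go i x) = go u x) /\ (forall f, gh h (gh i f) = gh u f) /\
      (forall w, gv h (gv i w) = gv u w) /\ (forall s, gs h (gs i s) = gs u s) /\
      (forall x, go p (go h x) = go v x) /\ (forall f, gh p (gh h f) = gh v f) /\
      (forall w, gv p (gv h w) = gv v w) /\ (forall s, gs p (gs h s) = gs v s).

Definition dbl_cofibration (P Q : Dbl0) (i : DFun P Q) : Prop :=
  forall (X Y : DblCat) (p : DFun X Y), dbl_trivfib p -> llpD i p.

(* vertical morphisms are only identities: the vertical arrow dvid x is
   represented by the object x itself. *)
Definition HDbl (A : TwoCat0) : Dbl0 :=
  {| dob := ob2 A; dh := mor2 A; dv := ob2 A; dsq := cell2 A;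
     hsrc := @msrc A; htgt := @mtgt A; vsrc := fun x => x; vtgt := fun x => x;
     stop := @csrc A; sbot := @ctgt A;
     slft := fun a => msrc (csrc a); srgt := fun a => mtgt (csrc a);
     dhid := @idm A; dhc := @mcomp A; dvid := fun x => x; dvc := fun u _ => u;
     dsq_hid := fun x => idc (idm x); dsq_vid := @idc A;
     dsq_hc := @hcomp A; dsq_vc := @vcomp A |}.

Definition HDblFun (A B : TwoCat0) (F : TwoFun A B) : DFun (HDbl A) (HDbl B).
Proof.
  refine (@Build_DFun (HDbl A) (HDbl B) (fo F) (fm F) (fo F) (fc F) _ _ _ _ _ _ _ _ _ _ _ _ _ _ _ _);
  simpl; intros;
  repeat first [ rewrite f_csrc | rewrite f_ctgt | rewrite f_msrc | rewrite f_mtgt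
               | rewrite f_idc | rewrite f_idm ];
  auto using f_msrc, f_mtgt, f_csrc, f_ctgt, f_idm, f_mcomp, f_idc, f_vcomp, f_hcomp.
Defined.

(* The horizontal 2-category of HDbl F is F itself
   (HH_HDblFun), so it remains to show that V (HDbl F) is a biequivalence
   whenever F is (V_biequivalence); its objects, morphisms and 2-cells are the
   objects, 2-cells and commuting squares of 2-cells of the 2-categories.

   Both directions transport lifting problems.
   - The right adjoint Hsub of HDbl (the horizontal 2-category of a double
     category, cut down to globular squares by the general construction
     wf_part) sends trivial fibrations of DblCat to trivial fibrations of 2Cat,
     and lifting problems transpose along the adjunction (transpose,
     untranspose); hence HDbl preserves cofibrations.
   - HDbl sends trivial fibrations of 2Cat to trivial fibrations of DblCat
     (HDbl_trivfib): a trivial fibration is surjective on objects and locally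
     surjective on morphisms, which makes V (HDbl p) satisfy a general
     criterion for Lack fibrations (surjective_lack_fibration).  Since double
     functors between double categories of the form HDbl _ are 2-functors,
     lifts in DblCat give lifts in 2Cat; hence HDbl reflects cofibrations. *)

From Stdlib Require Import FunctionalExtensionality PropExtensionality.
From Stdlib Require Import ProofIrrelevance ClassicalEpsilon.

(** * The horizontal double category of a 2-category, [HH (HDbl F) = F] *)

(* In [HDbl A] every square is globular, since all vertical arrows are identities. *)
Lemma globular_HDbl (A : TwoCat0) : @globular (HDbl A) = fun _ => True.
Proof.
  extensionality a; apply propositional_extensionality; unfold globular; simpl; tauto.
Qed.

(* Hence the underlying horizontal 2-category of [HDbl F] is [F] itself: any
   property of 2-functors holds for one iff it holds for the other. *)
Lemma HH_HDblFun (A B : TwoCat0) (F : TwoFun A B)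
  (Phi : forall P Q : Pre2, PFun P Q -> Prop) :
  Phi _ _ (HHfun (HDblFun F)) <-> Phi _ _ (pfun_of F).
Proof.
  destruct A, B; unfold HHfun, HH, pfun_of, pre2_of.
  repeat match goal with |- context [@globular (HDbl ?X)] => rewrite (globular_HDbl X) end.
  reflexivity.
Qed.

Lemma HDbl_laws (A : TwoCat0) (L : TwoCatLaws A) : DblLaws (HDbl A).
Proof.
  destruct L; constructor; simpl; intros; auto;
    try (rewrite ?l_vcomp_src, ?l_hcomp_src, ?l_mcomp_src, ?l_mcomp_tgt, ?l_idc_src
           by assumption; auto; fail).
  (* the identity square on [idm u] composes vertically with itself to itself *)
  subst v; pose proof (l_vcomp_idl (idc (idm u))) as E; rewrite l_idc_src in E; auto.
Qed.

Definition HDblCat (A : TwoCat) : DblCat := Build_DblCat (@HDbl_laws A (tc_laws A)).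

(** * The well-formed part of a pre-2-category *)

(* The well-formed cells of a pre-2-category whose identity 2-cells are well
   formed carry the data of a 2-category (a [TwoCat0]); composites that are
   not well formed are replaced by an arbitrary default. *)
Section WellFormedPart.
Variable P : Pre2.
Hypothesis cv_idc : forall f : mor2 P, cv (idc f).

Definition wf_cell : Type := {a : cell2 P | cv a}.

Definition restrict (s : cell2 P) (d : wf_cell) : wf_cell :=
  match excluded_middle_informative (cv s) with
  | left h => exist _ s h
  | right _ => d
  end.

Lemma restrict_val (s : cell2 P) (d : wf_cell) : cv s -> proj1_sig (restrict s d) = s.
Proof.
  intro h; unfold restrict; destruct (excluded_middle_informative (cv s)); simpl; tauto.
Qed.

Lemma wf_cell_eq (a b : wf_cell) : proj1_sig a = proj1_sig b -> a = b.
Proof. destruct a, b; simpl; intros ->; f_equal; apply proof_irrelevance. Qed.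

Definition wf_part : TwoCat0 :=
  {| ob2 := ob2 P; mor2 := mor2 P; cell2 := wf_cell;
     msrc := @msrc P; mtgt := @mtgt P;
     csrc := fun a => csrc (proj1_sig a); ctgt := fun a => ctgt (proj1_sig a);
     idm := @idm P; mcomp := @mcomp P;
     idc := fun f => exist _ (idc f) (cv_idc f);
     vcomp := fun a b => restrict (vcomp (proj1_sig a) (proj1_sig b)) a;
     hcomp := fun a b => restrict (hcomp (proj1_sig a) (proj1_sig b)) a |}.

Hypothesis cv_vcomp :
  forall a b : cell2 P, cv a -> cv b -> ctgt a = csrc b -> cv (vcomp a b).
Hypothesis cv_hcomp : forall a b : cell2 P, cv a -> cv b ->
  mtgt (csrc a) = msrc (csrc b) -> cv (hcomp a b).

Lemma wf_vcomp_val (a b : wf_cell) : ctgt (proj1_sig a) = csrc (proj1_sig b) ->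
  proj1_sig (@vcomp wf_part a b) = vcomp (proj1_sig a) (proj1_sig b).
Proof. intro e; apply restrict_val, cv_vcomp; auto; apply proj2_sig. Qed.

Lemma wf_hcomp_val (a b : wf_cell) :
  mtgt (csrc (proj1_sig a)) = msrc (csrc (proj1_sig b)) ->
  proj1_sig (@hcomp wf_part a b) = hcomp (proj1_sig a) (proj1_sig b).
Proof. intro e; apply restrict_val, cv_hcomp; auto; apply proj2_sig. Qed.

Lemma wf_is_cell (a : wf_cell) (f g : mor2 P) :
  @is_cell (pre2_of wf_part) a f g <-> is_cell (proj1_sig a) f g.
Proof. unfold is_cell; simpl; pose proof (proj2_sig a); tauto. Qed.

Lemma wf_invertible (a : wf_cell) :
  @invertible_cell (pre2_of wf_part) a <-> invertible_cell (proj1_sig a).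
Proof.
  unfold invertible_cell; split.
  - intros [_ [b [hb [e1 e2]]]]; apply wf_is_cell in hb.
    split; [exact (proj2_sig a)|]; exists (proj1_sig b); split; [exact hb|].
    destruct hb as [_ [sb tb]].
    apply (f_equal (@proj1_sig _ _)) in e1, e2.
    rewrite wf_vcomp_val in e1, e2 by (simpl in *; congruence); auto.
  - intros [_ [b [[cb [sb tb]] [e1 e2]]]]; split; [exact I|].
    exists (exist _ b cb); split; [apply wf_is_cell; split; auto|].
    split; apply wf_cell_eq; rewrite wf_vcomp_val; simpl; auto; congruence.
Qed.

Lemma wf_iso (a : wf_cell) (f g : mor2 P) :
  @iso_cell (pre2_of wf_part) a f g <-> iso_cell (proj1_sig a) f g.
Proof. unfold iso_cell; rewrite wf_is_cell, wf_invertible; reflexivity. Qed.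

Lemma wf_equivalence (f : mor2 P) : @equivalence (pre2_of wf_part) f <-> equivalence f.
Proof.
  unfold equivalence; split.
  - intros (g & a & b & e1 & e2 & ha & hb); rewrite wf_iso in ha, hb.
    exists g, (proj1_sig a), (proj1_sig b); auto.
  - intros (g & a & b & e1 & e2 & ha & hb).
    exists g, (exist _ a (proj1 (proj1 ha))), (exist _ b (proj1 (proj1 hb))).
    rewrite !wf_iso; auto.
Qed.
End WellFormedPart.

Section WellFormedFun.
Variables P Q : Pre2.
Hypothesis cvP_idc : forall f : mor2 P, cv (idc f).
Hypothesis cvQ_idc : forall f : mor2 Q, cv (idc f).
Hypothesis cvP_vcomp :
  forall a b : cell2 P, cv a -> cv b -> ctgt a = csrc b -> cv (vcomp a b).
Hypothesis cvQ_vcomp :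
  forall a b : cell2 Q, cv a -> cv b -> ctgt a = csrc b -> cv (vcomp a b).
Variable F : PFun P Q.
Hypothesis F_cv : forall a, cv a -> cv (pfc F a).

Definition wf_fun : PFun (pre2_of (wf_part P cvP_idc)) (pre2_of (wf_part Q cvQ_idc)) :=
  @Build_PFun (pre2_of (wf_part P cvP_idc)) (pre2_of (wf_part Q cvQ_idc)) (pfo F) (pfm F)
    (fun a => exist _ (pfc F (proj1_sig a)) (F_cv _ (proj2_sig a))).

Lemma wf_fun_biequivalence : biequivalence F -> biequivalence wf_fun.
Proof.
  intros [B1 [B2 [B3 B4]]]; split; [|split; [|split]]; simpl.
  - intros y; destruct (B1 y) as (x & g & e1 & e2 & e3); exists x, g.
    rewrite wf_equivalence; auto.
  - intros x x' g e1 e2; destruct (B2 x x' g e1 e2) as (f & b & q1 & q2 & q3).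
    exists f, (exist _ b (proj1 (proj1 q3))); rewrite wf_iso; auto.
  - intros f f' b e1 e2 k; rewrite wf_is_cell in k.
    destruct (B3 f f' (proj1_sig b) e1 e2 k) as (a & q1 & q2).
    exists (exist _ a (proj1 q1)); rewrite wf_is_cell; split; [exact q1|].
    apply wf_cell_eq; exact q2.
  - intros a a' _ _ e1 e2 e3; apply wf_cell_eq.
    apply (f_equal (@proj1_sig _ _)) in e3; apply B4; auto; apply proj2_sig.
Qed.

Lemma wf_fun_lack_fibration : lack_fibration F -> lack_fibration wf_fun.
Proof.
  intros [L1 L2]; split; simpl.
  - intros c b e k; rewrite wf_equivalence in k by exact cvQ_vcomp.
    destruct (L1 c b e k) as (a & q1 & q2 & q3); exists a.
    rewrite wf_equivalence; auto.
  - intros c beta e k; rewrite wf_invertible in k by exact cvQ_vcomp.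
    destruct (L2 c (proj1_sig beta) e k) as (al & q1 & q2 & q3).
    exists (exist _ al (proj1 q2)); split; [exact q1|split].
    + apply wf_invertible; auto.
    + apply wf_cell_eq; exact q3.
Qed.
End WellFormedFun.

(** * The horizontal 2-category of a double category *)

Section GlobularSquares.
Variable D : DblCat.

Lemma glob_vid (f : dh D) : globular (dsq_vid f).
Proof.
  destruct (dc_laws D); unfold globular; rewrite d_sqvid_top, d_sqvid_lft, d_sqvid_rgt; auto.
Qed.

Lemma glob_par_src {s : dsq D} : globular s -> hsrc (sbot s) = hsrc (stop s).
Proof. destruct (dc_laws D); intros [g1 _]; rewrite <- d_sq_lft_tgt, g1, d_vid_tgt; auto. Qed.

Lemma glob_par_tgt {s : dsq D} : globular s -> htgt (sbot s) = htgt (stop s).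
Proof. destruct (dc_laws D); intros [_ g2]; rewrite <- d_sq_rgt_tgt, g2, d_vid_tgt; auto. Qed.

Lemma glob_hcond {a b : dsq D} : globular a -> globular b ->
  htgt (stop a) = hsrc (stop b) -> srgt a = slft b.
Proof. intros [_ g2] [g3 _] e; rewrite g2, g3, e; auto. Qed.

Lemma glob_vc (a b : dsq D) : globular a -> globular b -> sbot a = stop b ->
  globular (dsq_vc a b).
Proof.
  intros ga gb e; pose proof (glob_par_src ga) as E1; pose proof (glob_par_tgt ga) as E2.
  destruct ga as [g1 g2], gb as [g3 g4], (dc_laws D); unfold globular.
  rewrite d_sqvc_lft, d_sqvc_rgt, d_sqvc_top by exact e.
  rewrite g1, g2, g3, g4, <- e, E1, E2.
  split; [pose proof (d_vc_idl (dvid (hsrc (stop a)))) as E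
         |pose proof (d_vc_idl (dvid (htgt (stop a)))) as E];
    rewrite d_vid_src in E; exact E.
Qed.

Lemma glob_hc (a b : dsq D) : globular a -> globular b ->
  htgt (stop a) = hsrc (stop b) -> globular (dsq_hc a b).
Proof.
  intros ga gb e; pose proof (glob_hcond ga gb e) as E.
  destruct ga as [g1 g2], gb as [g3 g4], (dc_laws D); unfold globular.
  rewrite d_sqhc_lft, d_sqhc_rgt, d_sqhc_top by exact E.
  rewrite d_hc_src, d_hc_tgt by exact e; auto.
Qed.

Lemma vc_top (a b : dsq D) : sbot a = stop b -> stop (dsq_vc a b) = stop a.
Proof. destruct (dc_laws D); auto. Qed.
Lemma vc_bot (a b : dsq D) : sbot a = stop b -> sbot (dsq_vc a b) = sbot b.
Proof. destruct (dc_laws D); auto. Qed.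
Lemma hc_top (a b : dsq D) : globular a -> globular b -> htgt (stop a) = hsrc (stop b) ->
  stop (dsq_hc a b) = dhc (stop a) (stop b).
Proof. intros; destruct (dc_laws D); apply d_sqhc_top; apply glob_hcond; auto. Qed.
Lemma hc_bot (a b : dsq D) : globular a -> globular b -> htgt (stop a) = hsrc (stop b) ->
  sbot (dsq_hc a b) = dhc (sbot a) (sbot b).
Proof. intros; destruct (dc_laws D); apply d_sqhc_bot; apply glob_hcond; auto. Qed.
Lemma hc_src (f g : dh D) : htgt f = hsrc g -> hsrc (dhc f g) = hsrc f.
Proof. destruct (dc_laws D); auto. Qed.
Lemma hc_tgt (f g : dh D) : htgt f = hsrc g -> htgt (dhc f g) = htgt g.
Proof. destruct (dc_laws D); auto. Qed.
Lemma vid_top (f : dh D) : stop (dsq_vid f) = f.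
Proof. destruct (dc_laws D); auto. Qed.
Lemma vid_bot (f : dh D) : sbot (dsq_vid f) = f.
Proof. destruct (dc_laws D); auto. Qed.
Lemma hid_src (x : dob D) : hsrc (dhid x) = x.
Proof. destruct (dc_laws D); auto. Qed.
Lemma hid_tgt (x : dob D) : htgt (dhid x) = x.
Proof. destruct (dc_laws D); auto. Qed.
End GlobularSquares.
Arguments glob_par_src {D s}. Arguments glob_par_tgt {D s}. Arguments glob_hcond {D a b}.

Lemma glob_map {X Y : Dbl0} (p : DFun X Y) {s : dsq X} : globular s -> globular (gs p s).
Proof.
  intros [g1 g2]; unfold globular.
  rewrite g_lft, g_rgt, g_top, g_hsrc, g_htgt, g1, g2, !g_vid; auto.
Qed.

(* Bookkeeping tactics: [solve_globular] proves that a composite of globular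
   squares is globular, [solve_boundary] the equations between edges needed
   for the composites to be defined. *)
Ltac solve_globular := match goal with
 | |- globular (dsq_vc _ _) => apply glob_vc; [solve_globular|solve_globular|solve_boundary]
 | |- globular (dsq_hc _ _) => apply glob_hc; [solve_globular|solve_globular|solve_boundary]
 | |- globular (dsq_vid _) => apply glob_vid
 | |- globular _ => assumption end
with solve_boundary := repeat first
   [ rewrite vid_top | rewrite vid_bot | rewrite hid_src | rewrite hid_tgt
   | rewrite vc_top by solve_boundary | rewrite vc_bot by solve_boundary
   | rewrite hc_top by (first [solve_globular | solve_boundary])
   | rewrite hc_bot by (first [solve_globular | solve_boundary])
   | rewrite hc_src by solve_boundary | rewrite hc_tgt by solve_boundary
   | match goal with g : globular ?s |- context [hsrc (sbot ?s)] =>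
       rewrite (glob_par_src g) end
   | match goal with g : globular ?s |- context [htgt (sbot ?s)] =>
       rewrite (glob_par_tgt g) end ];
   first [ reflexivity | assumption | symmetry; assumption
         | match goal with H : ?x = ?y |- _ => progress rewrite <- H; solve_boundary end ].

(* The underlying horizontal 2-category of a double category, as an object of
   2Cat: its 2-cells are the globular squares. *)
Definition Hsub0 (D : DblCat) : TwoCat0 := wf_part (HH D) (@glob_vid D).

(* [restrict_val] with the well-formedness predicate in its simplified form. *)
Lemma Hsub_restrict_val (D : DblCat) (s : dsq D) (d : wf_cell (HH D)) :
  globular s -> @proj1_sig _ (@globular D) (restrict (HH D) s d) = s.
Proof. exact (restrict_val (HH D) s d). Qed.

Lemma Hsub_vcomp_val (D : DblCat) (a b : wf_cell (HH D)) :
  sbot (proj1_sig a) = stop (proj1_sig b) ->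
  proj1_sig (@vcomp (Hsub0 D) a b) = dsq_vc (proj1_sig a) (proj1_sig b).
Proof. exact (@wf_vcomp_val (HH D) (@glob_vid D) (@glob_vc D) a b). Qed.

Lemma Hsub_hcomp_val (D : DblCat) (a b : wf_cell (HH D)) :
  htgt (stop (proj1_sig a)) = hsrc (stop (proj1_sig b)) ->
  proj1_sig (@hcomp (Hsub0 D) a b) = dsq_hc (proj1_sig a) (proj1_sig b).
Proof. exact (@wf_hcomp_val (HH D) (@glob_vid D) (@glob_hc D) a b). Qed.

Lemma Hsub_laws (D : DblCat) : TwoCatLaws (Hsub0 D).
Proof.
  pose proof (dc_laws D) as L.
  constructor; simpl; intros.
  all: try (destruct L; auto; fail).
  all: repeat match goal with x : wf_cell _ |- _ => destruct x as [x ?] end; simpl in *.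
  all: try apply wf_cell_eq; simpl.
  all: repeat rewrite Hsub_restrict_val.
  all: try (solve_globular; fail).
  all: try (solve_boundary; fail).
  (* What remains are the double-category axioms themselves, the composability
     of globular squares being read off from their top and bottom edges. *)
  all: destruct L.
  - apply d_sqvc_idl.
  - apply d_sqvc_idr.
  - apply d_sqvc_assoc; assumption.
  - match goal with g : globular a |- _ => destruct g as [g1 _] end.
    rewrite <- d_sqhid_vid, <- g1; apply d_sqhc_idl.
  - match goal with g : globular a |- _ => destruct g as [_ g2] end.
    rewrite <- d_sqhid_vid, <- g2; apply d_sqhc_idr.
  - apply d_sqhc_assoc; apply glob_hcond; assumption.
  - apply d_sqvid_hc; assumption.
  - apply d_interchange; try assumption; apply glob_hcond; try assumption; solve_boundary.
Qed.

Definition Hsub (D : DblCat) : TwoCat := Build_TwoCat (Hsub_laws D).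

Definition Hsub_fun (X Y : DblCat) (p : DFun X Y) : TwoFun (Hsub X) (Hsub Y).
Proof.
  refine (@Build_TwoFun (Hsub X) (Hsub Y) (go p) (gh p)
     (fun a => exist _ (gs p (proj1_sig a)) (glob_map p (proj2_sig a)))
     (g_hsrc p) (g_htgt p) _ _ (g_hid p) (g_hc p) _ _ _); simpl.
  - intros; apply g_top.
  - intros; apply g_bot.
  - intros; apply wf_cell_eq; simpl; apply g_sqvid.
  - intros [a ga] [b gb] e; apply wf_cell_eq; simpl in *.
    rewrite !Hsub_restrict_val; [apply g_sqvc; auto|..];
      apply glob_vc; try apply glob_map; auto; rewrite ?g_top, ?g_bot, e; auto.
  - intros [a ga] [b gb] e; apply wf_cell_eq; simpl in *.
    rewrite !Hsub_restrict_val; [apply g_sqhc, glob_hcond; auto|..];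
      apply glob_hc; try apply glob_map; auto; rewrite ?g_top, ?g_hsrc, ?g_htgt, e; auto.
Defined.

Lemma Hsub_fun_biequivalence (X Y : DblCat) (p : DFun X Y) :
  biequivalence (HHfun p) -> biequivalence (pfun_of (Hsub_fun X Y p)).
Proof.
  exact (wf_fun_biequivalence (HH X) (HH Y) (@glob_vid X) (@glob_vid Y) (@glob_vc Y)
           (HHfun p) (fun a => @glob_map _ _ p a)).
Qed.

Lemma Hsub_fun_lack_fibration (X Y : DblCat) (p : DFun X Y) :
  lack_fibration (HHfun p) -> lack_fibration (pfun_of (Hsub_fun X Y p)).
Proof.
  exact (wf_fun_lack_fibration (HH X) (HH Y) (@glob_vid X) (@glob_vid Y) (@glob_vc X)
           (@glob_vc Y) (HHfun p) (fun a => @glob_map _ _ p a)).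
Qed.

(** * The adjunction [HDbl -| Hsub] *)

(* A double functor [HDbl A -> X] transposes to a 2-functor [A -> Hsub X]:
   the squares of [HDbl A] are globular, hence so are their images. *)
Definition transpose {A : TwoCat0} {X : DblCat} (G : DFun (HDbl A) X) :
  TwoFun A (Hsub X).
Proof.
  refine (@Build_TwoFun A (Hsub X) (go G) (gh G)
     (fun a => exist _ (gs G a) (glob_map G (s:=a) (conj eq_refl eq_refl)))
     (g_hsrc G) (g_htgt G) _ _ (g_hid G) (g_hc G) _ _ _).
  - intros; apply g_top.
  - intros; apply g_bot.
  - intros; apply wf_cell_eq; apply (g_sqvid G).
  - intros a b e; apply wf_cell_eq.
    rewrite Hsub_vcomp_val by (simpl; rewrite g_top, g_bot; simpl; rewrite e; auto).
    apply (g_sqvc G); auto.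
  - intros a b e; apply wf_cell_eq.
    rewrite Hsub_hcomp_val by (simpl; rewrite !g_top, g_hsrc, g_htgt; simpl; rewrite e; auto).
    apply (g_sqhc G); auto.
Defined.

(* Conversely a 2-functor [B -> Hsub X] is a double functor [HDbl B -> X]
   sending the (identity) vertical arrows of [HDbl B] to identities. *)
Definition untranspose {B : TwoCat0} {X : DblCat} (h : TwoFun B (Hsub X)) :
  DFun (HDbl B) X.
Proof.
  refine (@Build_DFun (HDbl B) X (fo h) (fm h) (fun x => dvid (fo h x))
     (fun a => proj1_sig (fc h a)) (f_msrc h) (f_mtgt h) _ _ (f_csrc h) (f_ctgt h)
     _ _ (f_idm h) (f_mcomp h) (fun _ => eq_refl) _ _ _ _ _).
  - intros; apply d_vid_src, dc_laws.
  - intros; apply d_vid_tgt, dc_laws.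
  - (* the images of squares are globular, with left edge the identity on
       the image of the source object *)
    intros s; destruct (proj2_sig (fc h s)) as [gl _]; rewrite gl.
    change (stop (proj1_sig (fc h s))) with (@csrc (Hsub X) (fc h s)).
    rewrite f_csrc; f_equal; apply (f_msrc h).
  - intros s; destruct (proj2_sig (fc h s)) as [_ gr]; rewrite gr.
    change (stop (proj1_sig (fc h s))) with (@csrc (Hsub X) (fc h s)).
    rewrite f_csrc; f_equal; apply (f_mtgt h).
  - intros u v e; simpl in e |- *; subst v; destruct (dc_laws X).
    pose proof (d_vc_idl (dvid (fo h u))) as E; rewrite d_vid_src in E; auto.
  - intros u; simpl; rewrite (f_idc h); simpl; rewrite (f_idm h).
    symmetry; apply d_sqhid_vid, dc_laws.
  - intros f; simpl; rewrite (f_idc h); reflexivity.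
  - intros a b e.
    change (proj1_sig (fc h (hcomp a b)) = dsq_hc (proj1_sig (fc h a)) (proj1_sig (fc h b))).
    rewrite (f_hcomp h e); apply Hsub_hcomp_val.
    change (mtgt (csrc (fc h a)) = msrc (csrc (fc h b))).
    rewrite !f_csrc, f_mtgt, f_msrc; f_equal; exact e.
  - intros a b e.
    change (proj1_sig (fc h (vcomp a b)) = dsq_vc (proj1_sig (fc h a)) (proj1_sig (fc h b))).
    rewrite (f_vcomp h e); apply Hsub_vcomp_val.
    change (ctgt (fc h a) = csrc (fc h b)).
    rewrite f_csrc, f_ctgt; f_equal; exact e.
Defined.

(* Double functors between horizontal double categories of 2-categories are
   exactly 2-functors ([HDbl] is fully faithful). *)
Definition twofun_of_dfun {A B : TwoCat0} (G : DFun (HDbl A) (HDbl B)) : TwoFun A B :=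
  @Build_TwoFun A B (go G) (gh G) (gs G) (g_hsrc G) (g_htgt G) (g_top G) (g_bot G)
    (g_hid G) (g_hc G) (g_sqvid G) (g_sqvc G) (g_sqhc G).

(** * [V (HDbl F)] is a biequivalence when [F] is *)

(* A 2-cell of [V (HDbl A)] is a commuting square of 2-cells of [A]: its
   well-formedness, stated in the language of [A]. *)
Definition vsquare_wf (A : TwoCat0) (c : VCell (cell2 A)) : Prop :=
  msrc (csrc (va c)) = msrc (csrc (vb c)) /\ mtgt (csrc (va c)) = mtgt (csrc (vb c)) /\
  csrc (vs0 c) = csrc (va c) /\ ctgt (vs0 c) = csrc (vb c) /\
  csrc (vs1 c) = ctgt (va c) /\ ctgt (vs1 c) = ctgt (vb c) /\
  vcomp (vs0 c) (vb c) = vcomp (va c) (vs1 c).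

Lemma VCell_wf_HDbl (A : TwoCat0) (c : VCell (cell2 A)) :
  @VCell_wf (HDbl A) c <-> vsquare_wf A c.
Proof. unfold VCell_wf, vsquare_wf, globular; simpl; tauto. Qed.

Lemma iso_cell_inverse {T : TwoCat0} {a : cell2 T} {f g : mor2 T} :
  @iso_cell (pre2_of T) a f g -> exists b, csrc b = g /\ ctgt b = f /\
    csrc a = f /\ ctgt a = g /\ vcomp a b = idc f /\ vcomp b a = idc g.
Proof. intros [[_ [s t]] [_ [b [[_ [bs bt]] [e1 e2]]]]]; exists b; subst; auto 10. Qed.

Lemma commuting_square_inverse (B : TwoCat) (u v b1 b2 c1 c2 : cell2 B) :
  csrc b1 = csrc u -> ctgt b1 = csrc v -> csrc b2 = ctgt u -> ctgt b2 = ctgt v ->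
  csrc c1 = csrc v -> ctgt c1 = csrc u -> csrc c2 = ctgt v -> ctgt c2 = ctgt u ->
  vcomp c1 b1 = idc (csrc v) -> vcomp b2 c2 = idc (ctgt u) ->
  vcomp b1 v = vcomp u b2 -> vcomp c1 u = vcomp v c2.
Proof.
  intros b1s b1t b2s b2t c1s c1t c2s c2t e12 e21 E; destruct (tc_laws B).
  transitivity (vcomp (vcomp c1 u) (vcomp b2 c2)).
  { rewrite e21, <- (l_vcomp_tgt c1 u) by congruence; rewrite l_vcomp_idr; auto. }
  rewrite (l_vcomp_assoc c1 u (vcomp b2 c2)) by (rewrite ?l_vcomp_src; congruence).
  rewrite <- (l_vcomp_assoc u b2 c2), <- E, (l_vcomp_assoc b1 v c2) by congruence.
  rewrite <- (l_vcomp_assoc c1 b1 (vcomp v c2)) by (rewrite ?l_vcomp_src; congruence).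
  rewrite e12, <- (l_vcomp_src v c2) by congruence; apply l_vcomp_idl.
Qed.

Lemma V_iso_of_isos (B : TwoCat) (u v b1 b2 : cell2 B) :
  @iso_cell (pre2_of B) b1 (csrc u) (csrc v) -> @iso_cell (pre2_of B) b2 (ctgt u) (ctgt v) ->
  vcomp b1 v = vcomp u b2 ->
  msrc (csrc u) = msrc (csrc v) -> mtgt (csrc u) = mtgt (csrc v) ->
  @iso_cell (VV (HDbl B)) (mkVCell u v b1 b2) u v.
Proof.
  intros I1 I2 E ms mt.
  destruct (iso_cell_inverse I1) as (c1 & c1s & c1t & b1s & b1t & e11 & e12).
  destruct (iso_cell_inverse I2) as (c2 & c2s & c2t & b2s & b2t & e21 & e22).
  pose proof (commuting_square_inverse B u v b1 b2 c1 c2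
                b1s b1t b2s b2t c1s c1t c2s c2t e12 e21 E) as E'.
  split; [|split].
  - split; [|simpl; auto]; apply VCell_wf_HDbl; repeat split; auto.
  - apply VCell_wf_HDbl; repeat split; auto.
  - exists (mkVCell v u c1 c2); simpl; split; [|split].
    + split; [|simpl; auto]; apply VCell_wf_HDbl; repeat split; auto.
    + rewrite e11, e21; auto.
    + rewrite e12, e22; auto.
Qed.

Section VBiequivalence.
Variables A B : TwoCat.
Variable F : TwoFun A B.
Hypothesis F_biequiv : biequivalence (pfun_of F).

(* An equivalence [g] of [B] gives the equivalence [idc g] of [V (HDbl B)],
   whose unit and counit are the squares built from those of [g]. *)
Lemma V_biess_surjective (y : ob2 B) : exists (x : ob2 A) (g : cell2 B),
   msrc (csrc g) = fo F x /\ mtgt (csrc g) = y /\ @equivalence (VV (HDbl B)) g.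
Proof.
  destruct F_biequiv as [B1 _]; simpl in B1.
  destruct (B1 y) as (x & g & e1 & e2 & (g' & a & b & k1 & k2 & h1 & h2)).
  pose proof (iso_cell_inverse h1) as (_ & _ & _ & as_ & at_ & _ & _).
  pose proof (iso_cell_inverse h2) as (_ & _ & _ & bs & bt & _ & _).
  simpl in k1, k2, as_, at_, bs, bt.
  destruct (tc_laws B).
  exists x, (idc g); rewrite l_idc_src; split; [exact e1|split; [exact e2|]].
  exists (idc g'), (mkVCell (idc (idm (msrc g))) (idc (mcomp g g')) a a),
    (mkVCell (idc (mcomp g' g)) (idc (idm (mtgt g))) b b).
  simpl; rewrite !l_idc_src; split; [exact k1|split; [exact k2|split]].
  - rewrite <- l_idc_mcomp by auto; apply V_iso_of_isos; rewrite ?l_idc_src, ?l_idc_tgt.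
    + exact h1.
    + exact h1.
    + rewrite <- as_, <- at_, l_vcomp_idl, l_vcomp_idr; auto.
    + rewrite l_idm_src, l_mcomp_src; auto.
    + rewrite l_idm_tgt, l_mcomp_tgt; auto.
  - rewrite <- l_idc_mcomp by auto; apply V_iso_of_isos; rewrite ?l_idc_src, ?l_idc_tgt.
    + exact h2.
    + exact h2.
    + rewrite <- bs, <- bt, l_vcomp_idl, l_vcomp_idr; auto.
    + rewrite l_idm_src, l_mcomp_src; auto.
    + rewrite l_idm_tgt, l_mcomp_tgt; auto.
Qed.

(* Lift both edges of [g] up to isomorphism, then the conjugated [g] by fullness. *)
Lemma V_locally_ess_surjective (x x' : ob2 A) (g : cell2 B) :
  msrc (csrc g) = fo F x -> mtgt (csrc g) = fo F x' ->
  exists (f : cell2 A) (b : VCell (cell2 B)),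
    msrc (csrc f) = x /\ mtgt (csrc f) = x' /\ @iso_cell (VV (HDbl B)) b (fc F f) g.
Proof.
  intros e1 e2; destruct F_biequiv as [_ [B2 [B3 _]]]; simpl in B2, B3.
  pose proof (tc_laws B) as LB.
  destruct (B2 x x' (csrc g) e1 e2) as (f1 & b1 & q1 & q2 & I1).
  destruct (B2 x x' (ctgt g)) as (f2 & b2 & r1 & r2 & I2).
  { destruct LB; rewrite <- l_cell_par_src; auto. }
  { destruct LB; rewrite <- l_cell_par_tgt; auto. }
  pose proof (iso_cell_inverse I1) as (c1 & c1s & c1t & b1s & b1t & e11 & e12).
  pose proof (iso_cell_inverse I2) as (c2 & c2s & c2t & b2s & b2t & e21 & e22).
  simpl in *; destruct LB.
  destruct (B3 f1 f2 (vcomp b1 (vcomp g c2))) as (al & [_ [als alt]] & eal);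
    try congruence.
  { split; [exact I|]; split.
    - rewrite l_vcomp_src; [|rewrite l_vcomp_src]; congruence.
    - rewrite l_vcomp_tgt; [rewrite l_vcomp_tgt|rewrite l_vcomp_src]; congruence. }
  simpl in als, alt.
  exists al, (mkVCell (fc F al) g b1 b2); rewrite als; split; [exact q1|split; [exact q2|]].
  apply V_iso_of_isos.
  - rewrite f_csrc, als; exact I1.
  - rewrite f_ctgt, alt; exact I2.
  - rewrite eal, l_vcomp_assoc by (rewrite ?l_vcomp_src, ?l_vcomp_tgt; congruence).
    rewrite l_vcomp_assoc, e22, l_vcomp_idr by congruence; auto.
  - rewrite f_csrc, f_msrc, als, q1; auto.
  - rewrite f_csrc, f_mtgt, als, q2; auto.
Qed.

(* A square of 2-cells in the image lifts componentwise, and still commutes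
   because [F] is faithful on 2-cells. *)
Lemma V_locally_full (f f' : cell2 A) (b : VCell (cell2 B)) :
  msrc (csrc f) = msrc (csrc f') -> mtgt (csrc f) = mtgt (csrc f') ->
  @is_cell (VV (HDbl B)) b (fc F f) (fc F f') ->
  exists a : VCell (cell2 A), @is_cell (VV (HDbl A)) a f f' /\
    mkVCell (fc F (va a)) (fc F (vb a)) (fc F (vs0 a)) (fc F (vs1 a)) = b.
Proof.
  intros ms mt [w [e1 e2]]; destruct F_biequiv as [_ [_ [B3 B4]]]; simpl in *.
  pose proof (tc_laws A) as LA.
  apply VCell_wf_HDbl in w; destruct b as [b1 b2 b3 b4]; simpl in *; subst b1 b2.
  destruct w as (_ & _ & w3 & w4 & w5 & w6 & w7); simpl in w3, w4, w5, w6, w7.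
  destruct (B3 (csrc f) (csrc f') b3 ms mt) as (t0 & [_ [t0s t0t]] & et0).
  { split; [exact I|]; rewrite <- !f_csrc; auto. }
  destruct (B3 (ctgt f) (ctgt f') b4) as (t1 & [_ [t1s t1t]] & et1).
  { destruct LA; rewrite <- !l_cell_par_src; auto. }
  { destruct LA; rewrite <- !l_cell_par_tgt; auto. }
  { split; [exact I|]; rewrite <- !f_ctgt; auto. }
  exists (mkVCell f f' t0 t1); split; [|simpl; rewrite et0, et1; auto].
  split; [|simpl; auto]; apply VCell_wf_HDbl; repeat split; auto.
  apply B4; auto.
  - destruct LA; rewrite !l_vcomp_src; auto.
  - destruct LA; rewrite !l_vcomp_tgt; auto.
  - rewrite !f_vcomp by auto; simpl; rewrite et0, et1; auto.
Qed.

Lemma V_locally_faithful (a a' : VCell (cell2 A)) :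
  @VCell_wf (HDbl A) a -> @VCell_wf (HDbl A) a' -> va a = va a' -> vb a = vb a' ->
  mkVCell (fc F (va a)) (fc F (vb a)) (fc F (vs0 a)) (fc F (vs1 a)) =
  mkVCell (fc F (va a')) (fc F (vb a')) (fc F (vs0 a')) (fc F (vs1 a')) -> a = a'.
Proof.
  intros w w' e1 e2 e3; destruct F_biequiv as [_ [_ [_ B4]]]; simpl in B4.
  apply VCell_wf_HDbl in w, w'.
  destruct a as [a1 a2 a3 a4], a' as [a1' a2' a3' a4']; simpl in *; subst a1' a2'.
  destruct w as (_ & _ & w3 & w4 & w5 & w6 & _), w' as (_ & _ & w3' & w4' & w5' & w6' & _).
  simpl in *; injection e3; intros q4 q3.
  f_equal; apply B4; auto; congruence.
Qed.

Lemma V_biequivalence : biequivalence (VVfun (HDblFun F)).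
Proof.
  split; [|split; [|split]].
  - exact V_biess_surjective.
  - exact V_locally_ess_surjective.
  - exact V_locally_full.
  - exact V_locally_faithful.
Qed.
End VBiequivalence.

(** * Trivial fibrations *)

(* A functor of pre-2-categories that is surjective on objects, locally
   surjective on morphisms and bijective on 2-cells between lifted parallel
   morphisms is a Lack fibration: everything lifts strictly, and invertibility
   of the lifts is reflected. *)
Section SurjectiveLackFibration.
Variables P Q : Pre2.
Variable F : PFun P Q.

Hypothesis P_idm_src : forall x : ob2 P, msrc (idm x) = x.
Hypothesis P_idm_tgt : forall x : ob2 P, mtgt (idm x) = x.
Hypothesis P_mcomp_src : forall f g : mor2 P, mtgt f = msrc g -> msrc (mcomp f g) = msrc f.
Hypothesis P_mcomp_tgt : forall f g : mor2 P, mtgt f = msrc g -> mtgt (mcomp f g) = mtgt g.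
Hypothesis P_idc_src : forall f : mor2 P, csrc (idc f) = f.
Hypothesis P_idc_tgt : forall f : mor2 P, ctgt (idc f) = f.
Hypothesis P_vcomp_src : forall a b : cell2 P, ctgt a = csrc b -> csrc (vcomp a b) = csrc a.
Hypothesis P_vcomp_tgt : forall a b : cell2 P, ctgt a = csrc b -> ctgt (vcomp a b) = ctgt b.
Hypothesis P_cv_idc : forall f : mor2 P, cv (idc f).
Hypothesis P_cv_vcomp :
  forall a b : cell2 P, cv a -> cv b -> ctgt a = csrc b -> cv (vcomp a b).
Hypothesis Q_par_src : forall b : cell2 Q, cv b -> msrc (csrc b) = msrc (ctgt b).
Hypothesis Q_par_tgt : forall b : cell2 Q, cv b -> mtgt (csrc b) = mtgt (ctgt b).

Hypothesis F_msrc : forall f, msrc (pfm F f) = pfo F (msrc f).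
Hypothesis F_mtgt : forall f, mtgt (pfm F f) = pfo F (mtgt f).
Hypothesis F_csrc : forall a, csrc (pfc F a) = pfm F (csrc a).
Hypothesis F_ctgt : forall a, ctgt (pfc F a) = pfm F (ctgt a).
Hypothesis F_idm : forall x, pfm F (idm x) = idm (pfo F x).
Hypothesis F_mcomp :
  forall f g, mtgt f = msrc g -> pfm F (mcomp f g) = mcomp (pfm F f) (pfm F g).
Hypothesis F_idc : forall f, pfc F (idc f) = idc (pfm F f).
Hypothesis F_vcomp : forall a b, cv a -> cv b -> ctgt a = csrc b ->
  pfc F (vcomp a b) = vcomp (pfc F a) (pfc F b).

Hypothesis F_surj_ob : forall y, exists x, pfo F x = y.
Hypothesis F_surj_mor : forall x x' g, msrc g = pfo F x -> mtgt g = pfo F x' ->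
  exists f, msrc f = x /\ mtgt f = x' /\ pfm F f = g.
Hypothesis F_full : forall f f' b, msrc f = msrc f' -> mtgt f = mtgt f' ->
  is_cell b (pfm F f) (pfm F f') -> exists a, is_cell a f f' /\ pfc F a = b.
Hypothesis F_faithful : forall a a', cv a -> cv a' -> csrc a = csrc a' ->
  ctgt a = ctgt a' -> pfc F a = pfc F a' -> a = a'.

(* The inverse of [F a] lifts, and is inverse to [a] by faithfulness. *)
Lemma reflect_invertible (a : cell2 P) (f g : mor2 P) : is_cell a f g ->
  msrc f = msrc g -> mtgt f = mtgt g -> invertible_cell (pfc F a) -> invertible_cell a.
Proof.
  intros [ca [sa ta]] ms mt [_ [b [[cb [sb tb]] [e1 e2]]]].
  rewrite F_ctgt, ta in sb; rewrite F_csrc, sa in tb.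
  destruct (F_full g f b (eq_sym ms) (eq_sym mt) (conj cb (conj sb tb)))
    as (b' & [cb' [sb' tb']] & eb).
  split; [exact ca|]; exists b'; split; [split; [exact cb'|split; congruence]|].
  split; apply F_faithful; auto.
  - apply P_cv_vcomp; auto; congruence.
  - rewrite P_vcomp_src, P_idc_src; congruence.
  - rewrite P_vcomp_tgt, P_idc_tgt; congruence.
  - rewrite F_vcomp, F_idc, eb, e1, F_csrc; auto; congruence.
  - apply P_cv_vcomp; auto; congruence.
  - rewrite P_vcomp_src, P_idc_src; congruence.
  - rewrite P_vcomp_tgt, P_idc_tgt; congruence.
  - rewrite F_vcomp, F_idc, eb, e2, F_ctgt; auto; congruence.
Qed.

(* An equivalence [b : y -> F c] lifts together with its pseudo-inverse and
   its unit and counit. *)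
Lemma lift_equivalence (c : ob2 P) (b : mor2 Q) : mtgt b = pfo F c -> equivalence b ->
  exists a : mor2 P, mtgt a = c /\ equivalence a /\ pfm F a = b.
Proof.
  intros e (g & a1 & a2 & eg1 & eg2 & [[h1c [h1s h1t]] h1i] & [[h2c [h2s h2t]] h2i]).
  destruct (F_surj_ob (msrc b)) as [x ex].
  destruct (F_surj_mor x c b (eq_sym ex) e) as (b' & eb1 & eb2 & eb3).
  destruct (F_surj_mor c x g (eq_trans eg1 e) (eq_trans eg2 (eq_sym ex)))
    as (g' & eg'1 & eg'2 & eg'3).
  assert (cmp1 : mtgt b' = msrc g') by congruence.
  assert (cmp2 : mtgt g' = msrc b') by congruence.
  destruct (F_full (idm x) (mcomp b' g') a1) as (a1' & [c1 [s1 t1]] & ea1).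
  { rewrite P_idm_src, P_mcomp_src; auto. }
  { rewrite P_idm_tgt, P_mcomp_tgt; auto. }
  { split; [exact h1c|]; rewrite F_idm, F_mcomp, ex, eb3, eg'3 by auto; auto. }
  destruct (F_full (mcomp g' b') (idm c) a2) as (a2' & [c2 [s2 t2]] & ea2).
  { rewrite P_idm_src, P_mcomp_src; auto. }
  { rewrite P_idm_tgt, P_mcomp_tgt; auto. }
  { split; [exact h2c|]; rewrite F_idm, F_mcomp, <- e, eb3, eg'3 by auto; auto. }
  exists b'; split; [exact eb2|split; [|exact eb3]].
  exists g', a1', a2'; split; [congruence|split; [congruence|split]].
  - split; [split; [exact c1|split; [rewrite eb1; exact s1|exact t1]]|].
    apply (reflect_invertible a1' (idm x) (mcomp b' g')); [split; auto| | |].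
    + rewrite P_idm_src, P_mcomp_src; auto.
    + rewrite P_idm_tgt, P_mcomp_tgt; auto.
    + rewrite ea1; auto.
  - split; [split; [exact c2|split; [exact s2|rewrite eb2; exact t2]]|].
    apply (reflect_invertible a2' (mcomp g' b') (idm c)); [split; auto| | |].
    + rewrite P_idm_src, P_mcomp_src; auto.
    + rewrite P_idm_tgt, P_mcomp_tgt; auto.
    + rewrite ea2; auto.
Qed.

(* An invertible [beta : g => F c] lifts: first its source, then itself. *)
Lemma lift_invertible_cell (c : mor2 P) (beta : cell2 Q) :
  ctgt beta = pfm F c -> invertible_cell beta ->
  exists alpha : cell2 P, ctgt alpha = c /\ invertible_cell alpha /\ pfc F alpha = beta.
Proof.
  intros e k; pose proof k as [cb _].
  destruct (F_surj_mor (msrc c) (mtgt c) (csrc beta)) as (f & ef1 & ef2 & ef3).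
  { rewrite Q_par_src, e, F_msrc; auto. }
  { rewrite Q_par_tgt, e, F_mtgt; auto. }
  destruct (F_full f c beta) as (al & [ca [sa ta]] & eal); auto.
  { split; auto. }
  exists al; split; [exact ta|split; [|exact eal]].
  apply (reflect_invertible al f c); auto.
  - split; auto.
  - rewrite eal; auto.
Qed.

Lemma surjective_lack_fibration : lack_fibration F.
Proof. split; [exact lift_equivalence | exact lift_invertible_cell]. Qed.
End SurjectiveLackFibration.

Lemma iso_cell_sym {T : Pre2} {a : cell2 T} {f g : mor2 T} :
  iso_cell a f g -> exists b, iso_cell b g f.
Proof.
  intros [[ca [sa ta]] [_ [b [[cb [sb tb]] [e1 e2]]]]]; exists b.
  split; [split; [exact cb|split; congruence]|].
  split; [exact cb|]; exists a; split; [split; [exact ca|split; congruence]|].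
  split; congruence.
Qed.

(* A trivial fibration of 2Cat is surjective on objects: biessential
   surjectivity gives an equivalence [y -> p x0] (the pseudo-inverse of one
   [p x0 -> y]), and the source of a lift of it lies over [y]. *)
Lemma trivfib_surjective_ob (X Y : TwoCat) (p : TwoFun X Y) :
  lack_fibration (pfun_of p) -> biequivalence (pfun_of p) ->
  forall y, exists x, fo p x = y.
Proof.
  intros [L1 _] [B1 _] y; unfold pfun_of, pre2_of in *; cbn in *.
  destruct (B1 y) as (x0 & g & e1 & e2 & (g' & a & b & k1 & k2 & h1 & h2)).
  destruct (iso_cell_sym h1) as [ai hai]; destruct (iso_cell_sym h2) as [bi hbi].
  destruct (L1 x0 g') as (a0 & q1 & q2 & q3); [exact (eq_trans k2 e1)| |].
  - exists g, bi, ai; split; [congruence|split; [congruence|split]].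
    + rewrite k1; exact hbi.
    + rewrite k2; exact hai.
  - exists (msrc a0); rewrite <- f_msrc, q3; exact (eq_trans k1 e2).
Qed.

(* ... and locally surjective on morphisms: a morphism [g] is isomorphic to
   some [F f], and lifting the inverse isomorphism gives a 2-cell whose source
   is sent exactly to [g]. *)
Lemma trivfib_surjective_mor (X Y : TwoCat) (p : TwoFun X Y) :
  lack_fibration (pfun_of p) -> biequivalence (pfun_of p) ->
  forall x x' g, msrc g = fo p x -> mtgt g = fo p x' ->
    exists f, msrc f = x /\ mtgt f = x' /\ fm p f = g.
Proof.
  intros [_ L2] [_ [B2 _]] x x' g e1 e2; unfold pfun_of, pre2_of in *; cbn in *.
  destruct (B2 x x' g e1 e2) as (f & b & q1 & q2 & I).
  destruct (iso_cell_sym I) as [bi [[_ [bs bt]] Hi]].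
  destruct (L2 f bi bt Hi) as (al & r1 & r2 & r3).
  destruct (tc_laws X).
  exists (csrc al); split; [rewrite l_cell_par_src, r1; auto|].
  split; [rewrite l_cell_par_tgt, r1; auto|].
  rewrite <- f_csrc, r3; exact bs.
Qed.

Lemma VHDbl_cv_idc (X : TwoCat) (f : cell2 X) :
  @VCell_wf (HDbl X) (mkVCell f f (idc (csrc f)) (idc (ctgt f))).
Proof.
  apply VCell_wf_HDbl; unfold vsquare_wf; destruct (tc_laws X); simpl.
  rewrite l_vcomp_idl, l_vcomp_idr, l_idc_src, l_idc_tgt; repeat split; auto.
Qed.

Lemma VHDbl_cv_vcomp (X : TwoCat) (a b : VCell (cell2 X)) :
  @VCell_wf (HDbl X) a -> @VCell_wf (HDbl X) b -> vb a = va b ->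
  @VCell_wf (HDbl X) (mkVCell (va a) (vb b) (vcomp (vs0 a) (vs0 b)) (vcomp (vs1 a) (vs1 b))).
Proof.
  destruct a as [a1 a2 a3 a4], b as [b1 b2 b3 b4]; rewrite !VCell_wf_HDbl; unfold vsquare_wf.
  intros (wa1 & wa2 & wa3 & wa4 & wa5 & wa6 & wa7) (wb1 & wb2 & wb3 & wb4 & wb5 & wb6 & wb7) e;
    simpl in *; subst b1; destruct (tc_laws X).
  rewrite !l_vcomp_src, !l_vcomp_tgt by congruence.
  repeat split; try congruence.
  (* pasting the two commuting squares *)
  rewrite l_vcomp_assoc, wb7, <- l_vcomp_assoc, wa7, l_vcomp_assoc by congruence; auto.
Qed.

Lemma V_lack_fibration (X Y : TwoCat) (p : TwoFun X Y) :
  lack_fibration (pfun_of p) -> biequivalence (pfun_of p) ->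
  lack_fibration (VVfun (HDblFun p)).
Proof.
  intros HL HB; pose proof (tc_laws X) as LX; pose proof (tc_laws Y) as LY.
  apply surjective_lack_fibration; simpl.
  all: try (intros; destruct LX; rewrite ?l_idc_src, ?l_hcomp_src, ?l_idm_src, ?l_idm_tgt,
              ?l_mcomp_src, ?l_mcomp_tgt; auto; fail).
  - intros f; apply VHDbl_cv_idc.
  - intros a b wa wb e; apply VHDbl_cv_vcomp; auto.
  - intros b wb; apply VCell_wf_HDbl in wb; apply wb.
  - intros b wb; apply VCell_wf_HDbl in wb; apply wb.
  - intros; rewrite f_csrc, f_msrc; auto.
  - intros; rewrite f_csrc, f_mtgt; auto.
  - intros; rewrite f_idc, f_idm; auto.
  - intros; apply f_hcomp; auto.
  - intros; rewrite !f_idc, f_csrc, f_ctgt; auto.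
  - intros [a1 a2 a3 a4] [b1 b2 b3 b4] wa wb e; apply VCell_wf_HDbl in wa, wb.
    unfold vsquare_wf in *; simpl in *; subst b1.
    destruct wa as (_ & _ & _ & wa4 & _ & wa6 & _), wb as (_ & _ & wb3 & _ & wb5 & _ & _).
    rewrite !f_vcomp by congruence; auto.
  - exact (trivfib_surjective_ob X Y p HL HB).
  - (* a 2-cell of [Y] between images lifts edge by edge, then by fullness *)
    intros x x' g e1 e2.
    destruct (trivfib_surjective_mor X Y p HL HB x x' (csrc g) e1 e2) as (h & h1 & h2 & h3).
    destruct (trivfib_surjective_mor X Y p HL HB x x' (ctgt g)) as (k & k1 & k2 & k3).
    { destruct LY; rewrite <- l_cell_par_src; auto. }
    { destruct LY; rewrite <- l_cell_par_tgt; auto. }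
    destruct HB as [_ [_ [B3 _]]]; simpl in B3.
    destruct (B3 h k g) as (a & [_ [as_ at_]] & ea); try congruence.
    { split; [exact I|split; auto]. }
    exists a; simpl in as_, at_; rewrite as_; auto.
  - exact (V_locally_full X Y p HB).
  - exact (V_locally_faithful X Y p HB).
Qed.

Lemma HDbl_trivfib (X Y : TwoCat) (p : TwoFun X Y) : lack_fibration (pfun_of p) ->
  biequivalence (pfun_of p) -> dbl_trivfib (HDblFun p).
Proof.
  intros HL HB; split; [|split; [|split]].
  - apply (HH_HDblFun _ _ p (fun _ _ G => lack_fibration G)); exact HL.
  - apply V_lack_fibration; auto.
  - apply (HH_HDblFun _ _ p (fun _ _ G => biequivalence G)); exact HB.
  - apply V_biequivalence; exact HB.
Qed.

(** * Cofibrations *)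

(* If [F] is a cofibration of 2Cat then so is [HDbl F]: a lifting problem
   against a trivial fibration [p] of double categories transposes to one
   against the trivial fibration [Hsub p] of 2Cat. *)
Lemma HDbl_preserves_cofibrations (A B : TwoCat) (F : TwoFun A B) :
  cofibration2 F -> dbl_cofibration (HDblFun F).
Proof.
  intros HC X Y p [Hl1 [_ [Hb1 _]]] u v e1 e2 _ e4.
  destruct (HC (Hsub X) (Hsub Y) (Hsub_fun X Y p) (Hsub_fun_lack_fibration X Y p Hl1)
              (Hsub_fun_biequivalence X Y p Hb1) (transpose u) (transpose v) e1 e2)
    as (h & k1 & k2 & k3 & k4 & k5 & k6).
  - intro a; apply wf_cell_eq; apply e4.
  - exists (untranspose h); simpl; repeat split; intros.
    + apply k1.
    + apply k2.
    + pose proof (k1 w) as E; simpl in E; rewrite E; symmetry; exact (g_vid u w).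
    + exact (f_equal (@proj1_sig _ _) (k3 s)).
    + apply k4.
    + apply k5.
    + pose proof (k4 w) as E; simpl in E; rewrite g_vid, E; symmetry; exact (g_vid v w).
    + exact (f_equal (@proj1_sig _ _) (k6 s)).
Qed.

(* If [HDbl F] is a cofibration of DblCat then [F] is one of 2Cat: solve the
   lifting problem against [HDbl p] and read the lift as a 2-functor. *)
Lemma HDbl_reflects_cofibrations (A B : TwoCat) (F : TwoFun A B) :
  dbl_cofibration (HDblFun F) -> cofibration2 F.
Proof.
  intros HC X Y p Hf Hb u v e1 e2 e3.
  destruct (HC (HDblCat X) (HDblCat Y) (HDblFun p) (HDbl_trivfib X Y p Hf Hb)
              (HDblFun u) (HDblFun v) e1 e2 e1 e3)
    as (h & k1 & k2 & _ & k4 & k5 & k6 & _ & k8).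
  exists (twofun_of_dfun h); simpl; auto 7.
Qed.

Theorem theorem6p8 (A B : TwoCat) (F : TwoFun A B) :
  (biequiv2 F <-> dbl_weq (HDblFun F)) /\
  (cofibration2 F <-> dbl_cofibration (HDblFun F)).
Proof.
  pose proof (HH_HDblFun _ _ F (fun _ _ G => biequivalence G)) as H_biequiv.
  split; split.
  - intro H; split; [apply H_biequiv; exact H | apply V_biequivalence; exact H].
  - intros [H _]; apply H_biequiv; exact H.
  - apply HDbl_preserves_cofibrations.
  - apply HDbl_reflects_cofibrations.
Qed.
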